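(* Let $\lambda_0\in(0,1/2)$ and let $\nu$ be uniformly distributed on $[0,\pi]$, $n_1=\cos\nu$, $n_2=\sin\nu$. Then $$E\left[n_2^2n_1\log\left(\frac{1-\frac{4\lambda_0n_1}{1+4\lambda_0^2}}{1+\frac{4\lambda_0n_1}{1+4\lambda_0^2}}\right)\right]=-\lambda_0+\frac43\lambda_0^3.$$
   Context: Here $\log$ is the natural logarithm. *)

From Stdlib Require Import Reals.
From Coquelicot Require Import Coquelicot.
Open Scope R_scope.

(* Expectation of g(nu) for nu uniformly distributed on [0, PI]:
   E[g(nu)] = (1/PI) * int_0^PI g(nu) dnu.  Existence of the integral is
   asserted separately in the statement (ex_RInt). *)
Definition unif_0_pi_expect (g : R -> R) : R := RInt g 0 PI / PI.

Definition lemma7_integrand (l0 : R) (nu : R) : R :=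
  let n1 := cos nu in
  let n2 := sin nu in
  let a := 4 * l0 * n1 / (1 + 4 * l0 ^ 2) in
  n2 ^ 2 * n1 * ln ((1 - a) / (1 + a)).

(** Integrate by parts against [sin^3 / 3]: the boundary terms vanish and the
    logarithm differentiates to [2 a sin / (1 - a^2 cos^2)] with
    [a = 4 l0 / (1 + 4 l0^2)], leaving [-(2a/3) int_0^PI sin^4 / (1 - a^2 cos^2)].
    A partial fraction decomposition reduces this to integrals of [1], [cos^2] and
    the Poisson-type kernel [k / (sin^2 + k^2 cos^2)] with [k = sqrt (1 - a^2)],
    whose integral over [0, PI] is [PI]. For this [a] one has
    [k = (1 - 4 l0^2) / (1 + 4 l0^2)], and the result is a rational function of
    [l0] that simplifies to [- l0 + 4/3 l0^3]. *)

From Stdlib Require Import Reals Lra Nsatz ssreflect.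
From Coquelicot Require Import Coquelicot.
Open Scope R_scope.

Lemma is_RInt_derive_R (F f : R -> R) (a b : R) :
  (forall x, Rmin a b <= x <= Rmax a b -> is_derive F x (f x)) ->
  (forall x, Rmin a b <= x <= Rmax a b -> continuous f x) ->
  is_RInt f a b (F b - F a).
Proof. exact: is_RInt_derive. Qed.

Lemma is_RInt_parts (F f G g : R -> R) (a b I : R) :
  (forall x, Rmin a b <= x <= Rmax a b -> is_derive F x (f x) /\ continuous f x) ->
  (forall x, Rmin a b <= x <= Rmax a b -> is_derive G x (g x) /\ continuous g x) ->
  is_RInt (fun x => F x * g x) a b I ->
  is_RInt (fun x => f x * G x) a b (F b * G b - F a * G a - I).
Proof.
  move=> dF dG HFg.
  have Hprod := is_RInt_scal_derive F G f g a b
    (fun x hx => proj1 (dF x hx)) (fun x hx => proj1 (dG x hx))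
    (fun x hx => proj2 (dF x hx)) (fun x hx => proj2 (dG x hx)).
  have Hdiff := is_RInt_minus _ _ _ _ _ _ Hprod HFg.
  apply: is_RInt_ext Hdiff => x _.
  rewrite /minus /plus /opp /scal /= /mult /=; ring.
Qed.

Lemma sin_cos_combination_pos (k x : R) : 0 < k -> 0 < k * cos x ^ 2 + sin x ^ 2.
Proof.
  move=> hk. have e := sin2_cos2 x. rewrite /Rsqr in e.
  case: (Rle_lt_dec k 1) => ?; nra.
Qed.

(* A continuous determination of [atan (tan x / k)] on all of [R]: by the tangent
   subtraction formula the arctangent term is the angle from [x] to [atan (tan x / k)]. *)
Definition lift_angle (k x : R) : R :=
  x + atan ((1 - k) * sin x * cos x / (k * cos x ^ 2 + sin x ^ 2)).

Lemma is_derive_lift_angle (k x : R) : 0 < k ->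
  is_derive (lift_angle k) x (k / (sin x ^ 2 + k ^ 2 * cos x ^ 2)).
Proof.
  move=> hk. rewrite /lift_angle.
  have pos1 := sin_cos_combination_pos k x hk.
  have pos2 := sin_cos_combination_pos (k ^ 2) x ltac:(nra).
  have e := sin2_cos2 x.
  auto_derive; first by lra.
  rewrite /Rsqr in e. field_simplify_eq; last by repeat split; nra.
  clear pos1 pos2; cbn [pow] in *; nsatz.
Qed.

Lemma is_RInt_poisson_kernel (k : R) : 0 < k ->
  is_RInt (fun x => k / (sin x ^ 2 + k ^ 2 * cos x ^ 2)) 0 PI PI.
Proof.
  move=> hk.
  have Hval : lift_angle k PI - lift_angle k 0 = PI.
  { rewrite /lift_angle sin_PI cos_PI sin_0 cos_0.
    rewrite !Rmult_0_r !Rmult_0_l !Rdiv_0_l atan_0; ring. }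
  rewrite -{2}Hval.
  apply: is_RInt_derive_R => x _; first exact: is_derive_lift_angle.
  apply: ex_derive_continuous.
  have pos := sin_cos_combination_pos (k ^ 2) x ltac:(nra).
  auto_derive; lra.
Qed.

Lemma is_RInt_cos_sqr : is_RInt (fun x => cos x ^ 2) 0 PI (PI / 2).
Proof.
  set F := fun x => (x + sin x * cos x) / 2.
  have Hval : F PI - F 0 = PI / 2 by rewrite /F sin_PI sin_0; field.
  rewrite -Hval.
  apply: is_RInt_derive_R => x _.
  - rewrite /F; auto_derive; first by [].
    have e := sin2_cos2 x. rewrite /Rsqr in e. nra.
  - apply: ex_derive_continuous. by auto_derive.
Qed.

Lemma sin4_div_partial_fractions (a k x : R) : a <> 0 -> 0 < k -> a ^ 2 + k ^ 2 = 1 ->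
  sin x ^ 4 / (1 - a ^ 2 * cos x ^ 2)
  = / a ^ 4 * ((2 * a ^ 2 - 1) - a ^ 2 * cos x ^ 2
               + k ^ 3 * (k / (sin x ^ 2 + k ^ 2 * cos x ^ 2))).
Proof.
  move=> ha hk hak.
  have e := sin2_cos2 x. rewrite /Rsqr in e.
  have denom : sin x ^ 2 + k ^ 2 * cos x ^ 2 = 1 - a ^ 2 * cos x ^ 2 by nra.
  have pos := sin_cos_combination_pos (k ^ 2) x ltac:(nra).
  rewrite denom. field_simplify_eq; last by split; [nra | exact: ha].
  clear denom pos; cbn [pow] in *; nsatz.
Qed.

Lemma is_RInt_sin4_div (a k : R) : a <> 0 -> 0 < k -> a ^ 2 + k ^ 2 = 1 ->
  is_RInt (fun x => sin x ^ 4 / (1 - a ^ 2 * cos x ^ 2)) 0 PI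
    (PI * (3 / 2 * a ^ 2 - 1 + k ^ 3) / a ^ 4).
Proof.
  move=> ha hk hak.
  have Hsum := is_RInt_scal _ _ _ (/ a ^ 4) _
    (is_RInt_plus _ _ _ _ _ _
       (is_RInt_minus _ _ _ _ _ _ (is_RInt_const 0 PI (2 * a ^ 2 - 1))
          (is_RInt_scal _ _ _ (a ^ 2) _ is_RInt_cos_sqr))
       (is_RInt_scal _ _ _ (k ^ 3) _ (is_RInt_poisson_kernel k hk))).
  have -> : PI * (3 / 2 * a ^ 2 - 1 + k ^ 3) / a ^ 4
            = scal (/ a ^ 4) (plus (minus (scal (PI - 0) (2 * a ^ 2 - 1))
                (scal (a ^ 2) (PI / 2))) (scal (k ^ 3) PI)).
  { rewrite /minus /plus /opp /scal /= /mult /=. field. exact: ha. }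
  apply: is_RInt_ext Hsum => x _.
  rewrite (sin4_div_partial_fractions a k x ha hk hak).
  by rewrite /minus /plus /opp /scal /= /mult /=.
Qed.

Definition log_ratio (a x : R) : R := ln ((1 - a * cos x) / (1 + a * cos x)).

Lemma one_pm_mul_cos_pos (a x : R) : -1 < a < 1 ->
  0 < 1 - a * cos x /\ 0 < 1 + a * cos x.
Proof. move=> ha. have hc := COS_bound x. case: (Rle_lt_dec 0 a) => ?; nra. Qed.

Lemma is_derive_log_ratio (a x : R) : -1 < a < 1 ->
  is_derive (log_ratio a) x (2 * a * sin x / (1 - a ^ 2 * cos x ^ 2)).
Proof.
  move=> ha. rewrite /log_ratio.
  have [p1 p2] := one_pm_mul_cos_pos a x ha.
  auto_derive.
  { repeat split; try apply: Rdiv_lt_0_compat; lra. }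
  field. repeat split; nra.
Qed.

Lemma is_RInt_sin2_cos_log_ratio (a k : R) : 0 < a -> 0 < k -> a ^ 2 + k ^ 2 = 1 ->
  is_RInt (fun x => sin x ^ 2 * cos x * log_ratio a x) 0 PI
    (- 2 / 3 * PI * (3 / 2 * a ^ 2 - 1 + k ^ 3) / a ^ 3).
Proof.
  move=> ha hk hak.
  have a_lt_1 : -1 < a < 1 by nra.
  set J := PI * (3 / 2 * a ^ 2 - 1 + k ^ 3) / a ^ 4.
  have Hsin4 : is_RInt (fun x => sin x ^ 3 / 3 * (2 * a * sin x / (1 - a ^ 2 * cos x ^ 2)))
                 0 PI (2 * a / 3 * J).
  { apply: is_RInt_ext (is_RInt_scal _ _ _ (2 * a / 3) _
                          (is_RInt_sin4_div a k ltac:(lra) hk hak)) => x _.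
    have [p1 p2] := one_pm_mul_cos_pos a x a_lt_1.
    rewrite /scal /= /mult /=. field. nra. }
  have := is_RInt_parts (fun x => sin x ^ 3 / 3) (fun x => sin x ^ 2 * cos x)
    (log_ratio a) (fun x => 2 * a * sin x / (1 - a ^ 2 * cos x ^ 2)) 0 PI _ _ _ Hsin4.
  have -> : sin PI ^ 3 / 3 * log_ratio a PI - sin 0 ^ 3 / 3 * log_ratio a 0
            - 2 * a / 3 * J = - 2 / 3 * PI * (3 / 2 * a ^ 2 - 1 + k ^ 3) / a ^ 3.
  { rewrite sin_PI sin_0 /J. field. lra. }
  apply.
  - move=> x _; split; first by auto_derive; [| field].
    apply: ex_derive_continuous. by auto_derive.
  - move=> x _; split; first exact: is_derive_log_ratio.
    have [p1 p2] := one_pm_mul_cos_pos a x a_lt_1.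
    apply: ex_derive_continuous. auto_derive. nra.
Qed.

Theorem lemma7 (l0 : R) (hl0 : 0 < l0 < 1 / 2) :
  ex_RInt (lemma7_integrand l0) 0 PI /\
  unif_0_pi_expect (lemma7_integrand l0) = - l0 + 4 / 3 * l0 ^ 3.
Proof.
  set a := 4 * l0 / (1 + 4 * l0 ^ 2).
  set k := (1 - 4 * l0 ^ 2) / (1 + 4 * l0 ^ 2).
  have ha : 0 < a by apply: Rdiv_lt_0_compat; nra.
  have hk : 0 < k by apply: Rdiv_lt_0_compat; nra.
  have hak : a ^ 2 + k ^ 2 = 1 by rewrite /a /k; field; nra.
  have Hmoment : is_RInt (lemma7_integrand l0) 0 PI
                (- 2 / 3 * PI * (3 / 2 * a ^ 2 - 1 + k ^ 3) / a ^ 3).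
  { apply: is_RInt_ext (is_RInt_sin2_cos_log_ratio a k ha hk hak) => x _.
    rewrite /lemma7_integrand /log_ratio /=.
    by have -> : 4 * l0 * cos x / (1 + 4 * l0 ^ 2) = a * cos x by rewrite /a; field; nra. }
  split; first by exists (- 2 / 3 * PI * (3 / 2 * a ^ 2 - 1 + k ^ 3) / a ^ 3).
  rewrite /unif_0_pi_expect (is_RInt_unique _ _ _ _ Hmoment) /a /k.
  have hPI := PI_RGT_0.
  field; repeat split; nra.
Qed.
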